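(* Let $p\ge1$, $\sigma^2>0$, $\boldsymbol\beta\in\mathbb{R}^p$ not identically zero with $\beta_1\le\cdots\le\beta_p$, $\delta_1^2,\dots,\delta_p^2>0$, $\sum_{i=1}^p\beta_i/\delta_i^2\ge0$, and $\Sigma=\sigma^2\boldsymbol\beta\boldsymbol\beta^\top+\mathrm{diag}(\delta_1^2,\dots,\delta_p^2)$. Let $w^L$ be the solution of $\min_w w^\top\Sigma w$ subject to $w^\top\mathbf{1}_p=1$, $w\ge0$, let $K=\{i:w^L_i>0\}$ and $k=|K|$, and suppose $k<p$. Suppose $q>0$ additional assets are added, with betas $\beta_{p+1},\dots,\beta_{p+q}$ and idiosyncratic variances $\delta_{p+1}^2,\dots,\delta_{p+q}^2>0$, giving the enlarged covariance matrix $\Sigma'=\sigma^2\boldsymbol\beta'\boldsymbol\beta'^\top+\mathrm{diag}(\delta_1^2,\dots,\delta_{p+q}^2)$ on $p+q$ assets. If $\beta_{p+m}\ge\beta_{k+1}$ for all $m=1,\dots,q$, then the long-only minimum variance portfolio of the enlarged market has the same active set $K$, and the weights of the assets in $K$ are the same as in $w^L$ (all added assets receive weight zero).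
   Context: The long-only minimum variance portfolio for a positive definite covariance $\Sigma$ on $n$ assets is the unique minimizer of $w^\top\Sigma w$ over $w\in\mathbb{R}^n$ with $\sum_i w_i=1$, $w_i\ge0$. Its active set is the set of indices with strictly positive weight. *)

From HB Require Import structures.
From mathcomp Require Import all_boot all_order all_algebra.
Set Implicit Arguments. Unset Strict Implicit. Unset Printing Implicit Defensive.
Import Order.TTheory GRing.Theory Num.Theory.
Local Open Scope ring_scope.

Definition factor_cov (R : realFieldType) (n : nat) (s2 : R)
  (b d2 : 'I_n -> R) : 'M[R]_n :=
  s2 *: (\col_i b i *m \row_j b j) + diag_mx (\row_i d2 i).

Definition pvar (R : realFieldType) (n : nat) (S : 'M[R]_n) (w : 'cV[R]_n) : R :=
  (w^T *m S *m w) 0 0.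

Definition long_only (R : realFieldType) (n : nat) (w : 'cV[R]_n) : Prop :=
  \sum_i w i 0 = 1 /\ forall i, 0 <= w i 0.

Definition lo_mvp (R : realFieldType) (n : nat) (S : 'M[R]_n) (w : 'cV[R]_n) : Prop :=
  long_only w /\ forall v : 'cV[R]_n, long_only v -> pvar S w <= pvar S v.

Definition active_set (R : realFieldType) (n : nat) (w : 'cV[R]_n) : {set 'I_n} :=
  [set i | 0 < w i 0].

Definition catf (T : Type) (p q : nat) (f : 'I_p -> T) (g : 'I_q -> T)
  : 'I_(p + q) -> T :=
  fun i => match split i with inl j => f j | inr m => g m end.

Definition pad0 (R : realFieldType) (p q : nat) (w : 'cV[R]_p) : 'cV[R]_(p + q) :=
  \col_i catf (fun j => w j 0) (fun _ : 'I_q => 0) i.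

(* The variance w^T S w is strictly convex on the simplex, and a long-only w is
   its minimiser iff every marginal variance (S w)_i is at least w^T S w, with
   equality on the active set.  For the one-factor covariance,
   (S w)_i = s2 b_i (b^T w) + d_i w_i, so an asset is active iff
   s2 b_i (b^T w) < w^T S w.  The condition sum_i b_i / d_i >= 0 forces the
   portfolio beta b^T w to be positive as soon as some asset is inactive; with
   sorted betas the active set is then an initial segment, so asset k+1 is
   inactive, and every added asset with beta at least b_(k+1) satisfies the
   optimality condition at the zero-padded portfolio. *)

From HB Require Import structures.
From mathcomp Require Import all_boot all_order all_algebra.
From mathcomp Require Import ring lra.
Import Order.TTheory GRing.Theory Num.Theory.
Local Open Scope ring_scope.

Set Implicit Arguments.
Unset Strict Implicit.
Unset Printing Implicit Defensive.

Lemma cV_dotE (R : realFieldType) (n : nat) (u v : 'cV[R]_n) :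
  (u^T *m v) 0 0 = \sum_i u i 0 * v i 0.
Proof. by rewrite mxE; apply: eq_bigr => i _; rewrite mxE. Qed.

Lemma long_only_neq0 (R : realFieldType) (n : nat) (w : 'cV[R]_n) :
  long_only w -> w != 0.
Proof.
case=> sum_w _; apply: contra_eq_neq sum_w => ->.
rewrite big1 => [|i _]; last by rewrite [_ i 0]mxE.
by rewrite eq_sym oner_eq0.
Qed.

Lemma long_only_delta (R : realFieldType) (n : nat) (i : 'I_n) :
  long_only (delta_mx i 0 : 'cV[R]_n).
Proof.
split=> [|j]; last by rewrite mxE ler0n.
rewrite (bigD1 i) //= big1 => [|j ji]; first by rewrite mxE !eqxx addr0.
by rewrite mxE (negbTE ji).
Qed.

Lemma long_only_convex (R : realFieldType) (n : nat) (u v : 'cV[R]_n) (t : R) :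
  long_only u -> long_only v -> 0 <= t <= 1 -> long_only ((1 - t) *: u + t *: v).
Proof.
move=> [sum_u u_ge0] [sum_v v_ge0] /andP[t_ge0 t_le1].
split=> [|i]; last by rewrite !mxE addr_ge0 ?mulr_ge0 ?subr_ge0.
under eq_bigr => i _ do rewrite !mxE.
by rewrite big_split /= -!mulr_sumr sum_u sum_v !mulr1 subrK.
Qed.

Lemma long_only_exists_zero (R : realFieldType) (n : nat) (w : 'cV[R]_n) :
  long_only w -> (#|active_set w| < n)%N -> exists i, w i 0 = 0.
Proof.
move=> [_ w_ge0] card_lt.
have : active_set w != setT.
  by apply: contraTneq card_lt => ->; rewrite cardsT card_ord ltnn.
rewrite -subTset => /subsetPn[i _]; rewrite inE -leNgt => wi_le0.
by exists i; apply/eqP; rewrite eq_le wi_le0 w_ge0.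
Qed.

Section LongOnlyMinimumVariance.
Variables (R : realFieldType) (n : nat) (S : 'M[R]_n).
Hypotheses (S_sym : S^T = S) (S_posdef : forall h : 'cV_n, h != 0 -> 0 < pvar S h).

Lemma pvar_marginal w : pvar S w = \sum_i w i 0 * (S *m w) i 0.
Proof. by rewrite /pvar -mulmxA cV_dotE. Qed.

Lemma pvar_ge0 h : 0 <= pvar S h.
Proof.
have [->|/S_posdef/ltW //] := eqVneq h 0.
by rewrite /pvar mulmx0 mxE.
Qed.

Lemma pvarD w h :
  pvar S (w + h) = pvar S w + 2 * \sum_i h i 0 * (S *m w) i 0 + pvar S h.
Proof.
have addE (A B : 'M[R]_1) : (A + B) 0 0 = A 0 0 + B 0 0 by rewrite [LHS]mxE.
have cross : (w^T *m S *m h) 0 0 = (h^T *m (S *m w)) 0 0.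
  rewrite [LHS](_ : _ = (w^T *m S *m h)^T 0 0); last by rewrite [RHS]mxE.
  by rewrite !trmx_mul trmxK S_sym mulmxA.
rewrite -cV_dotE /pvar mulmxDr [(w + h)^T]raddfD !mulmxDl !addE cross mulmxA.
ring.
Qed.

Lemma pvarZ t h : pvar S (t *: h) = t ^+ 2 * pvar S h.
Proof.
rewrite /pvar linearZ /= [(t *: h)^T]linearZ /= -scalemxAl -scalemxAl scalerA.
by rewrite [LHS]mxE.
Qed.

Lemma pvar_long_only_gt0 w : long_only w -> 0 < pvar S w.
Proof. by move/long_only_neq0/S_posdef. Qed.

Lemma lo_mvp_marginal_ge w : lo_mvp S w -> forall i, pvar S w <= (S *m w) i 0.
Proof.
move=> [lo_w w_opt] i; rewrite leNgt; apply/negP => lt_i.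
(* Moving from w towards the vertex e_i by the step t = a / (a + C) lowers the
   variance by t a (1 + t). *)
set a := pvar S w - (S *m w) i 0.
have a_gt0 : 0 < a by rewrite subr_gt0.
set h := delta_mx i 0 - w.
set C := pvar S h.
have aC_gt0 : 0 < a + C by rewrite ltr_wpDr ?pvar_ge0.
set t := a / (a + C).
have t_gt0 : 0 < t by rewrite divr_gt0.
have tC : t * (a + C) = a by rewrite mulfVK ?gt_eqF.
have t_le1 : t <= 1 by rewrite /t ler_pdivrMr // mul1r lerDl pvar_ge0.
have slope : \sum_j (t *: h) j 0 * (S *m w) j 0 = t * - a.
  under eq_bigr => j _ do rewrite [(t *: h) j 0]mxE -mulrA.
  rewrite -mulr_sumr; congr (_ * _).
  under eq_bigr => j _ do rewrite [h j 0]mxE [(- w) j 0]mxE mxE eqxx andbT mulrDl mulNr.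
  rewrite big_split /= sumrN -pvar_marginal (bigD1 i) //= eqxx mul1r big1 => [|j ji].
    by rewrite addr0 opprB.
  by rewrite (negbTE ji) mul0r.
have v_lo : long_only ((1 - t) *: w + t *: delta_mx i 0).
  by apply: long_only_convex => //; [exact: long_only_delta | rewrite ltW].
have := w_opt _ v_lo.
have -> : (1 - t) *: w + t *: delta_mx i 0 = w + t *: h.
  by rewrite /h scalerBr scalerBl scale1r addrA addrAC.
rewrite pvarD slope pvarZ -/C.
have ta_gt0 : 0 < t * a by rewrite mulr_gt0.
nra.
Qed.

Lemma lo_mvp_marginal_active w i :
  lo_mvp S w -> 0 < w i 0 -> (S *m w) i 0 = pvar S w.
Proof.
move=> w_opt wi_gt0; have [[sum_w w_ge0] _] := w_opt.
have terms_ge0 j : true -> 0 <= w j 0 * ((S *m w) j 0 - pvar S w).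
  by move=> _; rewrite mulr_ge0 ?subr_ge0 ?lo_mvp_marginal_ge.
have : \sum_j w j 0 * ((S *m w) j 0 - pvar S w) = 0.
  under eq_bigr => j _ do rewrite mulrBr.
  by rewrite sumrB -pvar_marginal -mulr_suml sum_w mul1r subrr.
move/(psumr_eq0P terms_ge0)/(_ i isT)/eqP.
by rewrite mulf_eq0 gt_eqF //= subr_eq0 => /eqP.
Qed.

Lemma pvar_long_only_gap w v : (forall i, pvar S w <= (S *m w) i 0) ->
  long_only v -> pvar S w + pvar S (v - w) <= pvar S v.
Proof.
move=> marg_w [sum_v v_ge0].
have -> : pvar S v = pvar S (w + (v - w)) by rewrite addrC subrK.
rewrite (pvarD w) -addrA lerD2l lerDr pmulr_rge0 //.
under eq_bigr => j _ do rewrite [(v - w) j 0]mxE [(- w) j 0]mxE mulrDl mulNr.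
rewrite big_split /= sumrN -pvar_marginal subr_ge0.
rewrite -[leLHS]mul1r -sum_v mulr_suml; apply: ler_sum => j _.
by rewrite ler_wpM2l.
Qed.

Lemma lo_mvp_of_marginal w : long_only w ->
  (forall i, pvar S w <= (S *m w) i 0) -> lo_mvp S w.
Proof.
move=> lo_w marg_w; split=> // v lo_v.
apply: le_trans _ (pvar_long_only_gap marg_w lo_v).
by rewrite lerDl pvar_ge0.
Qed.

Lemma lo_mvp_unique w w' : lo_mvp S w -> lo_mvp S w' -> w' = w.
Proof.
move=> w_opt [lo_w' w'_opt]; have [lo_w _] := w_opt.
have gap := pvar_long_only_gap (lo_mvp_marginal_ge w_opt) lo_w'.
have : pvar S (w' - w) <= 0.
  by rewrite -(lerD2l (pvar S w)) addr0 (le_trans gap) ?w'_opt.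
by apply: contraTeq; rewrite -subr_eq0 -ltNge; exact: S_posdef.
Qed.

End LongOnlyMinimumVariance.

Section FactorModel.
Variables (R : realFieldType) (n : nat) (s2 : R) (b d : 'I_n -> R).

Definition pbeta (w : 'cV[R]_n) := \sum_i b i * w i 0.

Local Notation S := (factor_cov s2 b d).

Lemma factor_covE i j : S i j = s2 * (b i * b j) + d i *+ (i == j).
Proof. by rewrite /factor_cov !mxE big_ord1 !mxE. Qed.

Lemma trmx_factor_cov : S^T = S.
Proof.
apply/matrixP => i j; rewrite mxE !factor_covE (mulrC (b j)) eq_sym.
by case: eqP => [->|].
Qed.

Lemma factor_cov_mulmx w i : (S *m w) i 0 = s2 * b i * pbeta w + d i * w i 0.
Proof.
rewrite mxE; under eq_bigr => j _ do rewrite factor_covE mulrDl.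
rewrite big_split /= /pbeta mulr_sumr; congr (_ + _).
  by apply: eq_bigr => j _; rewrite !mulrA.
rewrite (bigD1 i) //= eqxx mulr1n big1 ?addr0 // => j ji.
by rewrite eq_sym (negbTE ji) mulr0n mul0r.
Qed.

Lemma pvar_factor_cov w : pvar S w = s2 * pbeta w ^+ 2 + \sum_i d i * w i 0 ^+ 2.
Proof.
rewrite pvar_marginal; under eq_bigr => i _ do rewrite factor_cov_mulmx mulrDr.
rewrite big_split /=; congr (_ + _).
  by rewrite expr2 /pbeta !mulr_sumr; apply: eq_bigr => i _; ring.
by apply: eq_bigr => i _; ring.
Qed.

Hypotheses (s2_ge0 : 0 <= s2) (d_gt0 : forall i, 0 < d i).

Lemma factor_cov_posdef h : h != 0 -> 0 < pvar S h.
Proof.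
move=> h_neq0; have [i hi_neq0] : exists i, h i 0 != 0.
  apply/existsP; apply: contraR h_neq0 => /existsPn hi_eq0.
  by apply/eqP/matrixP => i j; rewrite ord1 [RHS]mxE; apply/eqP/negPn.
rewrite pvar_factor_cov (bigD1 i) //=.
have tail_ge0 : 0 <= \sum_(j | j != i) d j * h j 0 ^+ 2.
  by apply: sumr_ge0 => j _; rewrite mulr_ge0 ?sqr_ge0 ?ltW.
have head_gt0 : 0 < d i * h i 0 ^+ 2 by rewrite mulr_gt0 ?exprn_even_gt0.
have := mulr_ge0 s2_ge0 (sqr_ge0 (pbeta h)).
lra.
Qed.

Variable w : 'cV[R]_n.
Hypothesis w_opt : lo_mvp S w.

Lemma lo_mvp_factor_marginal_ge i : pvar S w <= s2 * b i * pbeta w + d i * w i 0.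
Proof.
by rewrite -factor_cov_mulmx (lo_mvp_marginal_ge trmx_factor_cov factor_cov_posdef).
Qed.

Lemma lo_mvp_factor_marginal_active i :
  0 < w i 0 -> s2 * b i * pbeta w + d i * w i 0 = pvar S w.
Proof.
move=> wi_gt0; rewrite -factor_cov_mulmx.
exact (lo_mvp_marginal_active trmx_factor_cov factor_cov_posdef w_opt wi_gt0).
Qed.

Lemma lo_mvp_factor_activeP i : (0 < w i 0) = (s2 * b i * pbeta w < pvar S w).
Proof.
have [[_ w_ge0] _] := w_opt.
apply/idP/idP => [wi_gt0 | lt_i].
  by rewrite -(lo_mvp_factor_marginal_active wi_gt0) ltrDl mulr_gt0.
rewrite lt_def w_ge0 andbT; apply: contraTneq lt_i => wi_eq0.
by rewrite -leNgt; have := lo_mvp_factor_marginal_ge i; rewrite wi_eq0 mulr0 addr0.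
Qed.

Lemma lo_mvp_factor_pbeta_gt0 i0 :
  0 <= \sum_i b i / d i -> w i0 0 = 0 -> 0 < pbeta w.
Proof.
move=> sum_ge0 wi0_eq0; rewrite ltNge; apply/negP => B_le0.
(* If b^T w <= 0 then b_i w_i >= (w^T S w) b_i / d_i for every i, strictly at
   the inactive i0; summing contradicts sum_i b_i / d_i >= 0. *)
have [lo_w _] := w_opt; have [_ w_ge0] := lo_w.
have var_gt0 : 0 < pvar S w by apply: pvar_long_only_gt0 factor_cov_posdef w lo_w.
have active_bound i : 0 < w i 0 -> pvar S w * (b i / d i) <= b i * w i 0.
  move=> wi_gt0; have di_neq0 : d i != 0 by rewrite gt_eqF.
  have wiE : w i 0 = (pvar S w - s2 * b i * pbeta w) / d i.
    by rewrite -(lo_mvp_factor_marginal_active wi_gt0); field.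
  rewrite wiE [leRHS](_ : _ = pvar S w * (b i / d i) + s2 * b i ^+ 2 * - pbeta w / d i).
    rewrite lerDl; apply: divr_ge0; last exact: ltW.
    by rewrite mulr_ge0 ?oppr_ge0 // mulr_ge0 ?sqr_ge0.
  by field.
have inactive_bound i : w i 0 = 0 -> pvar S w * (b i / d i) < b i * w i 0.
  move=> wi0; have := lo_mvp_factor_marginal_ge i; rewrite wi0 mulr0 addr0 => var_le.
  have bi_lt0 : b i < 0.
    rewrite ltNge; apply/negP => bi_ge0.
    have := mulr_ge0_le0 (mulr_ge0 s2_ge0 bi_ge0) B_le0; lra.
  by rewrite mulr0 pmulr_rlt0 // pmulr_llt0 ?invr_gt0.
have : \sum_i pvar S w * (b i / d i) < \sum_i b i * w i 0.
  rewrite (bigD1 i0) // [ltRHS](bigD1 i0) //= ltr_leD ?inactive_bound //.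
  apply: ler_sum => i _; have := w_ge0 i; rewrite le_eqVlt => /orP[/eqP/esym wi0|].
    exact/ltW/inactive_bound.
  exact: active_bound.
rewrite -mulr_sumr -/(pbeta w); have := mulr_ge0 (ltW var_gt0) sum_ge0; lra.
Qed.

End FactorModel.

Lemma ord_notin_downclosed n (A : {set 'I_n}) (k : 'I_n) :
  (forall i j : 'I_n, (i <= j)%N -> j \in A -> i \in A) ->
  (#|A| <= k)%N -> k \notin A.
Proof.
move=> A_down cardA; apply/negP => kA.
have sub : [set widen_ord (ltn_ord k) i | i : 'I_k.+1] \subset A.
  by apply/subsetP => _ /imsetP[i _ ->]; apply: A_down kA; rewrite /= -ltnS ltn_ord.
have := subset_leq_card sub; rewrite card_imset ?card_ord.
  by rewrite leqNgt ltnS cardA.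
by move=> i j /(congr1 val) /= /val_inj.
Qed.

Lemma catf_lshift (T : Type) p q (f : 'I_p -> T) (g : 'I_q -> T) i :
  catf f g (lshift q i) = f i.
Proof. by rewrite /catf (unsplitK (inl _ i)). Qed.

Lemma catf_rshift (T : Type) p q (f : 'I_p -> T) (g : 'I_q -> T) i :
  catf f g (rshift p i) = g i.
Proof. by rewrite /catf (unsplitK (inr _ i)). Qed.

Lemma catf_all (T : Type) (P : T -> Prop) p q (f : 'I_p -> T) (g : 'I_q -> T) :
  (forall i, P (f i)) -> (forall i, P (g i)) -> forall i, P (catf f g i).
Proof. by move=> Pf Pg i; rewrite /catf; case: split. Qed.

Section AddedAssets.
Variables (R : realFieldType) (p q : nat) (s2 : R).
Variables (b d : 'I_p -> R) (b' d' : 'I_q -> R).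

Lemma pad0_lshift (w : 'cV[R]_p) i : pad0 q w (lshift q i) 0 = w i 0.
Proof. by rewrite mxE catf_lshift. Qed.

Lemma pad0_rshift (w : 'cV[R]_p) i : pad0 q w (rshift p i) 0 = 0.
Proof. by rewrite mxE catf_rshift. Qed.

Lemma long_only_pad0 (w : 'cV[R]_p) : long_only w -> long_only (pad0 q w).
Proof.
move=> [sum_w w_ge0]; split=> [|i].
  rewrite big_split_ord /= [X in _ + X]big1 => [|i _]; last exact: pad0_rshift.
  by rewrite addr0 -sum_w; apply: eq_bigr => i _; rewrite pad0_lshift.
by case: (split_ordP i) => j ->; rewrite ?pad0_lshift ?pad0_rshift.
Qed.

Lemma pbeta_pad0 (w : 'cV[R]_p) : pbeta (catf b b') (pad0 q w) = pbeta b w.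
Proof.
rewrite /pbeta big_split_ord /= [X in _ + X]big1 => [|i _].
  by rewrite addr0; apply: eq_bigr => i _; rewrite catf_lshift pad0_lshift.
by rewrite pad0_rshift mulr0.
Qed.

Lemma pvar_factor_cov_pad0 (w : 'cV[R]_p) :
  pvar (factor_cov s2 (catf b b') (catf d d')) (pad0 q w) = pvar (factor_cov s2 b d) w.
Proof.
rewrite !pvar_factor_cov pbeta_pad0 big_split_ord /= [X in _ + (_ + X)]big1 => [|i _].
  by rewrite addr0; congr (_ + _); apply: eq_bigr => i _; rewrite catf_lshift pad0_lshift.
by rewrite pad0_rshift expr0n mulr0.
Qed.

Hypotheses (s2_ge0 : 0 <= s2) (d_gt0 : forall i, 0 < d i) (d'_gt0 : forall i, 0 < d' i).

Lemma factor_cov_catf_posdef (h : 'cV[R]_(p + q)) :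
  h != 0 -> 0 < pvar (factor_cov s2 (catf b b') (catf d d')) h.
Proof.
exact: (factor_cov_posdef (catf b b') s2_ge0
  (catf_all (P := fun x => 0 < x) d_gt0 d'_gt0)).
Qed.

Lemma lo_mvp_factor_pad0 (w : 'cV[R]_p) :
  lo_mvp (factor_cov s2 b d) w ->
  (forall m, pvar (factor_cov s2 b d) w <= s2 * b' m * pbeta b w) ->
  lo_mvp (factor_cov s2 (catf b b') (catf d d')) (pad0 q w).
Proof.
move=> w_opt new_ge; have [lo_w _] := w_opt.
apply: (lo_mvp_of_marginal (trmx_factor_cov _ _ _) factor_cov_catf_posdef).
  exact: long_only_pad0.
move=> i; rewrite factor_cov_mulmx pbeta_pad0 pvar_factor_cov_pad0.
case: (split_ordP i) => j ->; rewrite ?pad0_lshift ?pad0_rshift ?catf_lshift ?catf_rshift.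
  exact (lo_mvp_factor_marginal_ge s2_ge0 d_gt0 w_opt j).
by rewrite mulr0 addr0.
Qed.

End AddedAssets.

Theorem corollary1 (R : realFieldType) (p q : nat) (s2 : R)
  (beta d2 : 'I_p -> R) (beta_new d2_new : 'I_q -> R) (wL : 'cV[R]_p)
  (hp : (0 < p)%N) (hq : (0 < q)%N) (hs2 : 0 < s2)
  (hbeta_nz : exists i, beta i != 0)
  (hsorted : forall i j : 'I_p, (i <= j)%N -> beta i <= beta j)
  (hd2 : forall i, 0 < d2 i)
  (hsum : 0 <= \sum_i beta i / d2 i)
  (hwL : lo_mvp (factor_cov s2 beta d2) wL)
  (hk : (#|active_set wL| < p)%N)
  (hd2_new : forall m, 0 < d2_new m)
  (hbeta_new : forall m : 'I_q, beta (Ordinal hk) <= beta_new m) :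
  lo_mvp (factor_cov s2 (catf beta beta_new) (catf d2 d2_new)) (pad0 q wL) /\
  (forall w' : 'cV[R]_(p + q),
     lo_mvp (factor_cov s2 (catf beta beta_new) (catf d2 d2_new)) w' ->
     w' = pad0 q wL).
Proof.
have s2_ge0 := ltW hs2.
have activeP := lo_mvp_factor_activeP s2_ge0 hd2 hwL.
have [i0 i0_inactive] := long_only_exists_zero (proj1 hwL) hk.
have B_gt0 := lo_mvp_factor_pbeta_gt0 s2_ge0 hd2 hwL hsum i0_inactive.
have k_inactive : Ordinal hk \notin active_set wL.
  apply: ord_notin_downclosed => // i j le_ij; rewrite !inE !activeP.
  by apply: le_lt_trans; rewrite ler_pM2r // ler_pM2l // hsorted.
have new_ge m : pvar (factor_cov s2 beta d2) wL <= s2 * beta_new m * pbeta beta wL.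
  apply: le_trans (_ : s2 * beta (Ordinal hk) * pbeta beta wL <= _).
    by move: k_inactive; rewrite inE activeP -leNgt.
  by rewrite ler_pM2r // ler_pM2l.
have pad_opt := lo_mvp_factor_pad0 s2_ge0 hd2 hd2_new hwL new_ge.
have posdef := factor_cov_catf_posdef beta beta_new s2_ge0 hd2 hd2_new.
by split=> // w'; apply: lo_mvp_unique (trmx_factor_cov _ _ _) posdef _ _ pad_opt.
Qed.
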